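(* Let $G$ be a locally precompact, sequentially complete topological group. Then every closed zero-dimensional metrizable subgroup of $G$ is discrete if and only if every compact metrizable zero-dimensional subgroup of $G$ is finite. In particular, these two conditions are equivalent for every locally countably compact topological group.
   Context: All topological groups are Hausdorff. A topological group is locally precompact if its completion with respect to the two-sided uniformity is locally compact; it is sequentially complete if every Cauchy sequence with respect to the two-sided uniformity converges in $G$; it is locally countably compact if some open neighbourhood of the identity has countably compact closure. A space is zero-dimensional if it has a base of clopen sets. *)

From HB Require Import structures.
From mathcomp Require Import all_boot all_order.
From mathcomp Require Import boolp classical_sets functions cardinality topology.
From Stdlib Require Rdefinitions.

Set Implicit Arguments.
Unset Strict Implicit.
Unset Printing Implicit Defensive.

Local Open Scope classical_set_scope.

Section TopGroup.
Context {T : topologicalType} (mul : T -> T -> T) (e : T) (inv : T -> T).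

Definition topological_group : Prop :=
  [/\ hausdorff_space T,
      (forall x y z, mul x (mul y z) = mul (mul x y) z),
      (forall x, mul e x = x /\ mul x e = x),
      (forall x, mul (inv x) x = e /\ mul x (inv x) = e) &
      (continuous (fun p : T * T => mul p.1 p.2) /\ continuous inv)].

Definition is_subgroup (S : set T) : Prop :=
  [/\ S e, (forall x y, S x -> S y -> S (mul x y)) & (forall x, S x -> S (inv x))].

Definition two_sided_cauchy_seq (u : nat -> T) : Prop :=
  forall U, nbhs e U -> exists N, forall m n, (N <= m)%N -> (N <= n)%N ->
    U (mul (inv (u m)) (u n)) /\ U (mul (u m) (inv (u n))).

Definition sequentially_complete : Prop :=
  forall u : nat -> T, two_sided_cauchy_seq u -> exists x : T, u @ \oo --> x.

Definition two_sided_cauchy_filter (F : set_system T) : Prop :=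
  forall U, nbhs e U -> exists A, F A /\
    forall x y, A x -> A y -> U (mul (inv x) y) /\ U (mul x (inv y)).

Definition raikov_complete : Prop :=
  forall F : set_system T, ProperFilter F -> two_sided_cauchy_filter F ->
    exists x : T, F --> x.

Definition locally_compact_group : Prop :=
  exists U, nbhs e U /\ compact (closure U).

Definition rel_open (S A : set T) : Prop := exists O, open O /\ A = O `&` S.
Definition rel_closed (S A : set T) : Prop := exists C, closed C /\ A = C `&` S.

Definition zero_dimensional_sub (S : set T) : Prop :=
  forall x U, S x -> open U -> U x ->
    exists B, [/\ rel_open S B, rel_closed S B, B x & B `<=` U].

Definition discrete_sub (S : set T) : Prop :=
  forall x, S x -> exists U, [/\ open U, U x & U `&` S = [set x]].

Definition metrizable_sub (S : set T) : Prop :=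
  exists d : T -> T -> Rdefinitions.R,
    [/\ (forall x y, S x -> S y -> (d x y = Rdefinitions.R0 <-> x = y)),
        (forall x y, S x -> S y -> d x y = d y x),
        (forall x y z, S x -> S y -> S z -> Rdefinitions.Rle (d x z) (Rdefinitions.Rplus (d x y) (d y z))) &
        (forall x A, S x ->
           ((exists O, [/\ open O, O x & O `&` S `<=` A]) <->
            (exists eps, Rdefinitions.Rlt Rdefinitions.R0 eps /\
               forall y, S y -> Rdefinitions.Rlt (d x y) eps -> A y)))].

Definition countably_compact (A : set T) : Prop :=
  forall U : nat -> set T, (forall n, open (U n)) ->
    (forall x, A x -> exists n, U n x) ->
    exists N, forall x, A x -> exists n, (n < N)%N /\ U n x.

Definition locally_countably_compact : Prop :=
  exists U, [/\ open U, U e & countably_compact (closure U)].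

End TopGroup.

Definition locally_precompact {T : topologicalType}
    (mul : T -> T -> T) (e : T) (inv : T -> T) : Prop :=
  exists (H : topologicalType) (mulH : H -> H -> H) (eH : H) (invH : H -> H)
         (j : T -> H),
    [/\ topological_group mulH eH invH,
        raikov_complete mulH eH invH,
        locally_compact_group eH /\ closure (range j) = setT,
        (injective j /\ forall x y, j (mul x y) = mulH (j x) (j y)) &
        (continuous j /\ forall x U, nbhs x U ->
            exists V, nbhs (j x) V /\ j @^-1` V `<=` U)].

Definition closed_zd_metrizable_subgroups_discrete {T : topologicalType}
    (mul : T -> T -> T) (e : T) (inv : T -> T) : Prop :=
  forall S : set T, is_subgroup mul e inv S -> closed S ->
    zero_dimensional_sub S -> metrizable_sub S -> discrete_sub S.

Definition compact_zd_metrizable_subgroups_finite {T : topologicalType}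
    (mul : T -> T -> T) (e : T) (inv : T -> T) : Prop :=
  forall S : set T, is_subgroup mul e inv S -> compact S ->
    metrizable_sub S -> zero_dimensional_sub S -> finite_set S.

From mathcomp Require Import all_boot all_order.
From mathcomp Require Import boolp classical_sets functions cardinality topology.
From Stdlib Require Import Rdefinitions RIneq Rtrigo_def Lra.

(* If closed zero-dimensional metrizable subgroups are discrete, a compact one is
   discrete and compact, hence finite.  Conversely let [S] be a closed
   zero-dimensional metrizable subgroup.  Either hypothesis on [G] gives a
   neighbourhood [N] of the identity in which every sequence of [S] has a cluster
   point: in the locally precompact case the image of the sequence clusters in the
   locally compact completion, and the countable neighbourhood base of [S] at the
   identity lets one extract a two-sided Cauchy subsequence, which converges by
   sequential completeness.  A clopen neighbourhood [B] of the identity in [S]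
   inside [N] is then countably compact, hence compact as [S] is metrizable.  By
   the tube lemma the subgroup [{x in S | xB <= B, x^-1 B <= B}] is open in [S];
   it is also closed in [S] and contained in [B], so it is a compact
   zero-dimensional metrizable subgroup, hence finite.  So the identity is
   isolated in [S], and [S] is discrete. *)

Set Implicit Arguments.
Unset Strict Implicit.
Unset Printing Implicit Defensive.

Local Open Scope classical_set_scope.

Lemma greedy_seq {X : eqType} (A : set X) (R : X -> X -> Prop) :
  (forall s : seq X, (forall c, c \in s -> A c) ->
     exists2 x, A x & forall c, c \in s -> R c x) ->
  exists2 u : nat -> X, (forall n, A (u n)) & forall i n, (i < n)%N -> R (u i) (u n).
Proof.
move=> ext; have [//|x0 Ax0 _] := ext [::].
have /choice [g Hg] : forall s : seq X, exists x,
    (forall c, c \in s -> A c) -> A x /\ forall c, c \in s -> R c x.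
  move=> s; have [sA|nsA] := pselect (forall c, c \in s -> A c); last by exists x0 => /nsA.
  by have [x Ax Rx] := ext s sA; exists x.
(* [prefix n] is [[:: u 0; ...; u n.-1]] for the sequence [u n := g (prefix n)]. *)
pose fix prefix n := if n is k.+1 then rcons (prefix k) (g (prefix k)) else [::].
have prefixA n c : c \in prefix n -> A c.
  elim: n c => [//|n IH] c /=; rewrite mem_rcons inE => /orP [/eqP ->|]; last exact: IH.
  by case: (Hg (prefix n) (IH)).
have in_prefix i n : (i < n)%N -> g (prefix i) \in prefix n.
  elim: n => [//|n IH]; rewrite ltnS leq_eqVlt => /orP [/eqP ->|/IH h] /=;
  by rewrite mem_rcons inE ?eqxx // h orbT.
exists (fun n => g (prefix n)) => [n|i n lt_in]; first by case: (Hg _ (prefixA n)).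
by case: (Hg _ (prefixA n)) => _; apply; apply: in_prefix.
Qed.

Lemma filter_forall_leq {X : Type} (F : set_system X) {FF : Filter F}
    (P : nat -> set X) k :
  (forall i, F (P i)) -> F (fun z => forall i, (i <= k)%N -> P i z).
Proof.
move=> FP; elim: k => [|k IH].
  by apply: filterS (FP 0%N) => z Pz i; rewrite leqn0 => /eqP ->.
apply: filterS2 IH (FP k.+1) => z Pz Pkz i.
by rewrite leq_eqVlt => /orP [/eqP -> //|]; rewrite ltnS; apply: Pz.
Qed.

Lemma ultra_finite_cover {I : eqType} {X : Type} (F : set_system X) (P : I -> set X)
    (s : seq I) :
  UltraFilter F -> F (fun x => exists2 c, c \in s & P c x) ->
  exists2 c, c \in s & F (P c).
Proof.
move=> FU; have FP : ProperFilter F by exact: ultra_proper.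
elim: s => [|c s IH] Fs; first by have [x [c]] := filter_ex Fs.
have [Fc|Fnc] := in_ultra_setVsetC (P c) FU; first by exists c; rewrite ?inE ?eqxx.
have [|c' c's Fc'] := IH; last by exists c'; rewrite // inE c's orbT.
apply: filterS2 Fs Fnc => x [c' + Pc'x] nPcx.
by rewrite inE => /orP [/eqP c'c|c's]; [rewrite c'c in Pc'x | exists c'].
Qed.

Section SequenceClusters.
Context {T : topologicalType}.

Lemma cluster_seqP (u : nat -> T) y :
  cluster (u @ \oo) y <->
  forall W, nbhs y W -> forall N, exists2 n, (N <= n)%N & W (u n).
Proof.
split=> [cl W yW N | freq A W [N _ uA] yW].
  have [_ [[n Nn <-] Wun]] := cl [set u n | n in [set n | (N <= n)%N]] W
    (ex_intro2 _ _ N I (fun n Nn => ex_intro2 _ _ n Nn erefl)) yW.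
  by exists n.
have [n Nn Wun] := freq W yW N.
by exists (u n); split => //; apply: uA.
Qed.

Definition seq_cluster_compact (A : set T) : Prop :=
  forall u : nat -> T, (forall n, A (u n)) -> exists2 y, A y & cluster (u @ \oo) y.

Lemma closed_seq_cluster (A : set T) (u : nat -> T) y :
  closed A -> (forall n, A (u n)) -> cluster (u @ \oo) y -> A y.
Proof.
move=> cA uA; rewrite clusterE => cly; apply: cA; apply: cly.
by exists 0%N => // n _; apply: uA.
Qed.

Lemma compact_seq_cluster_compact (A : set T) : compact A -> seq_cluster_compact A.
Proof.
move=> cA u uA; have [|y [Ay cly]] := cA (u @ \oo) _.
  by exists 0%N => // n _; apply: uA.
by exists y.
Qed.

Lemma countably_compact_seq_cluster_compact (A : set T) :
  countably_compact A -> seq_cluster_compact A.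
Proof.
move=> ccA u uA; apply: contrapT => /forall2NP noncl.
pose V N := \bigcup_(W in [set W | open W /\ forall n, (N <= n)%N -> ~ W (u n)]) W.
have oV N : open (V N) by apply: bigcup_open => W [].
have [|M VM] := ccA V oV.
  move=> y Ay; have [//|/cluster_seqP] := noncl y.
  move=> /existsNP [W /not_implyP [yW /existsNP [N /forall2NP Nfar]]].
  move: yW; rewrite nbhsE => -[O [oO Oy] OW]; exists N, O => //.
  by split=> // n Nn Oun; case: (Nfar n) => -[]; [rewrite Nn | apply: OW].
have [n [nM [W [_ WM] Wu]]] := VM (u M) (uA M).
by apply: (WM M) => //; apply: ltnW.
Qed.

Lemma cluster_subseq (u : nat -> T) y (G : nat -> set T) :
  cluster (u @ \oo) y -> (forall k, nbhs y (G k)) ->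
  exists phi : nat -> nat, forall k, (k <= phi k)%N /\ G k (u (phi k)).
Proof.
move=> /cluster_seqP cly yG.
suff /choice [phi Hphi] : forall k, exists n, (k <= n)%N /\ G k (u n) by exists phi.
by move=> k; have [n kn Gn] := cly (G k) (yG k) k; exists n.
Qed.

Lemma cvg_subseq_cluster (u : nat -> T) (phi : nat -> nat) x :
  (forall k, (k <= phi k)%N) -> (u \o phi) @ \oo --> x -> cluster (u @ \oo) x.
Proof.
move=> phi_ge cvx; apply/cluster_seqP => W /cvx [K _ KW] N.
exists (phi (maxn K N)); last by apply: KW; apply: leq_maxl.
by apply: leq_trans (phi_ge _); apply: leq_maxr.
Qed.

Lemma compact_discrete_sub_finite (S : set T) :
  compact S -> discrete_sub S -> finite_set S.
Proof.
move=> /compact_seq_cluster_compact cS dS; apply: contrapT => Sinf.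
have [s _|u uS u_neq] := @greedy_seq T S (fun c x => c <> x).
  apply: contrapT => sS; apply: Sinf; apply: (sub_finite_set _ (finite_seq s)).
  move=> x Sx; apply: contrapT => xs; apply: sS; exists x => // c cs cx.
  by apply: xs; rewrite -cx.
have [p Sp /cluster_seqP clp] := cS u uS.
have [U [oU Up US]] := dS p Sp.
have Up_eq n : U (u n) -> u n = p.
  by move=> Uun; have : (U `&` S) (u n) := conj Uun (uS n); rewrite US.
have [n1 _ U1] := clp U (open_nbhs_nbhs (conj oU Up)) 0%N.
have [n2 n12 U2] := clp U (open_nbhs_nbhs (conj oU Up)) n1.+1.
by apply: (u_neq n1 n2 n12); rewrite (Up_eq n1 U1) (Up_eq n2 U2).
Qed.

End SequenceClusters.

Lemma exists_inv_succ_lt eps : (0 < eps)%R -> exists m, (/ INR m.+1 < eps)%R.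
Proof.
by move=> /archimed_cor1 [N [N_lt N_gt0]]; exists N.-1; rewrite prednK //; apply/ltP.
Qed.

Lemma inv_succ_gt0 m : (0 < / INR m.+1)%R.
Proof. by apply/Rinv_0_lt_compat/lt_0_INR/ltP. Qed.

Lemma inv_succ_le m n : (m <= n)%N -> (/ INR n.+1 <= / INR m.+1)%R.
Proof.
by move=> le_mn; apply: Rinv_le_contravar; [apply/lt_0_INR/ltP | apply/le_INR/leP].
Qed.

Section MetricSubspace.
Context {T : topologicalType} (S : set T) (d : T -> T -> R).
Hypothesis dsym : forall x y, S x -> S y -> d x y = d y x.
Hypothesis dtri : forall x y z, S x -> S y -> S z -> (d x z <= d x y + d y z)%R.
Hypothesis dtop : forall x A, S x ->
  ((exists O, [/\ open O, O x & O `&` S `<=` A]) <->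
   (exists eps, (0 < eps)%R /\ forall y, S y -> (d x y < eps)%R -> A y)).

Lemma metric_ball_open x r : S x -> (0 < r)%R ->
  exists O, [/\ open O, O x & forall y, O y -> S y -> (d x y < r)%R].
Proof.
move=> Sx r_gt0; have [_ [|O [oO Ox OS]]] := dtop (fun y => (d x y < r)%R) Sx.
  by exists r.
by exists O; split => // y Oy Sy; apply: OS.
Qed.

Lemma nbhs_metric_ball x W : S x -> nbhs x W ->
  exists eps, (0 < eps)%R /\ forall y, S y -> (d x y < eps)%R -> W y.
Proof.
move=> Sx; rewrite nbhsE => -[O [oO Ox] OW].
by apply/(dtop W Sx).1; exists O; split => // y [Oy _]; apply: OW.
Qed.

Lemma seq_cluster_compact_totally_bounded (A : set T) r :
  A `<=` S -> seq_cluster_compact A -> (0 < r)%R ->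
  exists s : seq T, (forall c, c \in s -> A c) /\
    forall x, A x -> exists2 c, c \in s & (d c x < r)%R.
Proof.
move=> AS cA r_gt0; apply: contrapT => no_net.
have [s sA|u uA u_far] := @greedy_seq T A (fun c x => ~ (d c x < r)%R).
  apply: contrapT => sfar; apply: no_net; exists s; split => // x Ax.
  by apply: contrapT => xfar; apply: sfar; exists x => // c cs dcx; apply: xfar; exists c.
have [y Ay /cluster_seqP cly] := cA u uA.
have [O [oO Oy Oball]] := @metric_ball_open y (r / 2)%R (AS _ Ay) ltac:(lra).
have [n1 _ O1] := cly O (open_nbhs_nbhs (conj oO Oy)) 0%N.
have [n2 n12 O2] := cly O (open_nbhs_nbhs (conj oO Oy)) n1.+1.
apply: (u_far n1 n2 n12).
have := dtri (AS _ (uA n1)) (AS _ Ay) (AS _ (uA n2)).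
have := Oball _ O1 (AS _ (uA n1)); have := Oball _ O2 (AS _ (uA n2)).
rewrite (dsym (AS _ (uA n1)) (AS _ Ay)); lra.
Qed.

(* Each ultrafilter on [A] contains balls of radius [1/(n+1)] around some centers
   [c n] in [A]; a cluster point of [c] is then a limit of the ultrafilter. *)
Lemma seq_cluster_compact_compact (A : set T) :
  A `<=` S -> seq_cluster_compact A -> compact A.
Proof.
move=> AS cA; rewrite compact_ultra => F FU FA.
have /choice [c Hc] : forall n, exists c, A c /\
    F (fun z => A z /\ (d c z < / INR n.+1)%R).
  move=> n; have [s [sA s_net]] := seq_cluster_compact_totally_bounded AS cA (inv_succ_gt0 n).
  have [|c cs Fc] := @ultra_finite_cover T T F (fun c z => A z /\ (d c z < / INR n.+1)%R) s FU.
    by apply: filterS FA => x Ax; have [c cs dcx] := s_net x Ax; exists c.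
  by exists c; split => //; apply: sA.
have [y Ay /cluster_seqP cly] := cA c (fun n => (Hc n).1).
exists y; split => // W /(nbhs_metric_ball (AS _ Ay)) [eps [eps_gt0 ballW]].
have [O [oO Oy Oball]] := @metric_ball_open y (eps / 2)%R (AS _ Ay) ltac:(lra).
have [m m_lt] := @exists_inv_succ_lt (eps / 2)%R ltac:(lra).
have [n mn On] := cly O (open_nbhs_nbhs (conj oO Oy)) m.
apply: filterS (Hc n).2 => z [Az dz]; apply: ballW; first exact: AS.
have := dtri (AS _ Ay) (AS _ (Hc n).1) (AS _ Az).
have := Oball _ On (AS _ (Hc n).1); have := inv_succ_le mn; lra.
Qed.

End MetricSubspace.

Section Subspaces.
Context {T : topologicalType}.

Lemma metrizable_subS (S P : set T) : P `<=` S -> metrizable_sub S -> metrizable_sub P.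
Proof.
move=> PS [d [d0 dsym dtri dtop]]; exists d; split.
- by move=> x y Px Py; apply: d0; apply: PS.
- by move=> x y Px Py; apply: dsym; apply: PS.
- by move=> x y z Px Py Pz; apply: dtri; apply: PS.
move=> x A Px; have [OA_ball ball_OA] := dtop x (fun y => P y -> A y) (PS _ Px); split.
  move=> [O [oO Ox OA]]; have [|eps [eps_gt0 ballA]] := OA_ball.
    by exists O; split => // y [Oy Sy] Py; apply: OA.
  by exists eps; split => // y Py dy; apply: ballA => //; apply: PS.
move=> [eps [eps_gt0 ballA]]; have [|O [oO Ox OA]] := ball_OA.
  by exists eps; split => // y Sy dy Py; apply: ballA.
by exists O; split => // y [Oy Py]; apply: OA => //; split => //; apply: PS.
Qed.

Lemma zero_dimensional_subS (S P : set T) :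
  P `<=` S -> zero_dimensional_sub S -> zero_dimensional_sub P.
Proof.
move=> PS zd x U Px oU Ux.
have [B [[O [oO BO]] [C [cC BC]] Bx BU]] := zd x U (PS _ Px) oU Ux.
have BP_eq (D : set T) : B = D `&` S -> B `&` P = D `&` P.
  by move=> ->; rewrite -setIA (setIidr PS).
exists (B `&` P); split => //; last by move=> y [/BU].
- by exists O; split => //; apply: BP_eq.
- by exists C; split => //; apply: BP_eq.
Qed.

Lemma metrizable_sub_compact (S A : set T) :
  metrizable_sub S -> A `<=` S -> seq_cluster_compact A -> compact A.
Proof.
by move=> [d [_ dsym dtri dtop]]; apply: (seq_cluster_compact_compact dsym dtri dtop).
Qed.

Lemma metrizable_sub_countable_nbhs_base (S : set T) x : metrizable_sub S -> S x ->
  exists O : nat -> set T, (forall m, nbhs x (O m)) /\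
    forall U, nbhs x U -> exists m, O m `&` S `<=` U.
Proof.
move=> [d [_ dsym dtri dtop]] Sx.
have /choice [O HO] := fun m => metric_ball_open dtop Sx (inv_succ_gt0 m).
exists O; split => [m|U /(nbhs_metric_ball dtop Sx) [eps [eps_gt0 ballU]]].
  by have [oO Ox _] := HO m; apply: open_nbhs_nbhs.
have [m m_lt] := exists_inv_succ_lt eps_gt0; exists m => y [Oy Sy].
by have [_ _ /(_ y Oy Sy) dxy] := HO m; apply: ballU => //; lra.
Qed.

End Subspaces.

Section TopologicalGroup.
Context {T : topologicalType} (mul : T -> T -> T) (e : T) (inv : T -> T).
Hypothesis TG : topological_group mul e inv.

Lemma tg_mulgA x y z : mul x (mul y z) = mul (mul x y) z.
Proof. by case: TG => _ A _ _ _; apply: A. Qed.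

Lemma tg_mul1g x : mul e x = x.
Proof. by case: TG => _ _ /(_ x) []. Qed.

Lemma tg_mulg1 x : mul x e = x.
Proof. by case: TG => _ _ /(_ x) []. Qed.

Lemma tg_mulVg x : mul (inv x) x = e.
Proof. by case: TG => _ _ _ /(_ x) []. Qed.

Lemma tg_mulgV x : mul x (inv x) = e.
Proof. by case: TG => _ _ _ /(_ x) []. Qed.

Lemma tg_hausdorff : hausdorff_space T.
Proof. by case: TG. Qed.

Lemma continuous_mulg : continuous (fun p : T * T => mul p.1 p.2).
Proof. by case: TG => _ _ _ _ []. Qed.

Lemma continuous_invg : continuous inv.
Proof. by case: TG => _ _ _ _ []. Qed.

Lemma tg_mulg_eq1_inv a b : mul a b = e -> a = inv b.
Proof.
move=> ab_e; have : mul (mul a b) (inv b) = mul e (inv b) by rewrite ab_e.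
by rewrite -tg_mulgA tg_mulgV tg_mulg1 tg_mul1g.
Qed.

Lemma tg_invgK x : inv (inv x) = x.
Proof. by symmetry; apply: tg_mulg_eq1_inv; rewrite tg_mulgV. Qed.

Lemma tg_invg1 : inv e = e.
Proof. by symmetry; apply: tg_mulg_eq1_inv; rewrite tg_mul1g. Qed.

Lemma tg_invMg x y : inv (mul x y) = mul (inv y) (inv x).
Proof.
symmetry; apply: tg_mulg_eq1_inv.
by rewrite -tg_mulgA (tg_mulgA (inv x)) tg_mulVg tg_mul1g tg_mulVg.
Qed.

Lemma tg_mulKg x y : mul (inv x) (mul x y) = y.
Proof. by rewrite tg_mulgA tg_mulVg tg_mul1g. Qed.

Lemma tg_mulKVg x y : mul x (mul (inv x) y) = y.
Proof. by rewrite tg_mulgA tg_mulgV tg_mul1g. Qed.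

Lemma tg_idemg_eq1 a : mul a a = a -> a = e.
Proof. by move=> aa_a; rewrite -(tg_mulKg a a) aa_a tg_mulVg. Qed.

Lemma mulVg_translate h p q : mul (inv (mul (inv h) p)) (mul (inv h) q) = mul (inv p) q.
Proof. by rewrite tg_invMg tg_invgK -tg_mulgA tg_mulKVg. Qed.

Lemma mulgV_translate h p q : mul (mul p (inv h)) (inv (mul q (inv h))) = mul p (inv q).
Proof. by rewrite tg_invMg tg_invgK -tg_mulgA tg_mulKg. Qed.

Lemma nbhs_mulg x y W : nbhs (mul x y) W ->
  exists A1 A2, [/\ nbhs x A1, nbhs y A2 & forall a b, A1 a -> A2 b -> W (mul a b)].
Proof.
move=> /(@continuous_mulg (x, y)) [[A1 A2] /= [xA1 yA2] A12W].
by exists A1, A2; split => // a b a1 b2; apply: (A12W (a, b)).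
Qed.

Lemma continuous_mulgr b : continuous (fun x => mul x b).
Proof.
move=> x W /= /nbhs_mulg [A1 [A2 [xA1 bA2 A12W]]].
by apply: filterS xA1 => a a1; apply: A12W => //; apply: nbhs_singleton.
Qed.

Lemma continuous_mulgl a : continuous (fun x => mul a x).
Proof.
move=> x W /= /nbhs_mulg [A1 [A2 [aA1 xA2 A12W]]].
by apply: filterS xA2 => b b2; apply: A12W => //; apply: nbhs_singleton.
Qed.

Lemma continuous_mulVgr b : continuous (fun x => mul (inv x) b).
Proof.
move=> x; apply: (continuous_comp (f := inv) (g := fun x => mul x b)).
  exact: continuous_invg.
exact: continuous_mulgr.
Qed.

Lemma nbhs1_two_sided V : nbhs e V -> exists Q, nbhs e Q /\
  forall a b, Q a -> Q b -> V (mul (inv a) b) /\ V (mul a (inv b)).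
Proof.
rewrite -{1}(tg_mul1g e) => /nbhs_mulg [A1 [A2 [eA1 eA2 A12V]]].
have nbhs_inv A : nbhs e A -> nbhs e (inv @^-1` A).
  by move=> eA; apply: continuous_invg; rewrite tg_invg1.
exists (A1 `&` A2 `&` (inv @^-1` A1) `&` (inv @^-1` A2)); split.
  by apply: filterI; [apply: filterI; [apply: filterI|]|]; auto.
by move=> a b [[[a1 a2] a3 a4]] [[[b1 b2] b3 b4]]; split; apply: A12V.
Qed.

Definition stabilizer (S B : set T) : set T :=
  fun x => S x /\ forall b, B b -> B (mul x b) /\ B (mul (inv x) b).

Lemma stabilizer_subgroup S B :
  is_subgroup mul e inv S -> is_subgroup mul e inv (stabilizer S B).
Proof.
move=> [Se SM SV]; split.
- by split => // b Bb; rewrite tg_invg1 tg_mul1g.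
- move=> x y [Sx Bx] [Sy By]; split; first exact: SM.
  move=> b Bb; rewrite tg_invMg -!tg_mulgA; split; first exact: (Bx _ (By _ Bb).1).1.
  exact: (By _ (Bx _ Bb).2).2.
- move=> x [Sx Bx]; split; first exact: SV.
  by move=> b Bb; rewrite tg_invgK; have [] := Bx b Bb.
Qed.

Lemma stabilizer_sub S B : B e -> stabilizer S B `<=` B.
Proof. by move=> Be x [_ /(_ e Be) []]; rewrite tg_mulg1. Qed.

Lemma stabilizer_rel_closed S B C : is_subgroup mul e inv S ->
  closed C -> B = C `&` S -> exists2 C', closed C' & stabilizer S B = C' `&` S.
Proof.
move=> [_ SM SV] cC BCS.
exists (\bigcap_(b in B)
  ((fun x => mul x b) @^-1` C `&` (fun x => mul (inv x) b) @^-1` C)).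
  apply: closed_bigI => b _; apply: closedI; apply: (continuous_closedP _).1 => //.
    exact: continuous_mulgr.
  exact: continuous_mulVgr.
have BS : B `<=` S by rewrite BCS => x [].
apply/seteqP; split => x.
  by move=> [Sx Bx]; split => // b Bb; have := Bx b Bb; rewrite BCS => -[[? _] [? _]].
move=> [Cx Sx]; split => // b Bb; have [Cxb Cixb] := Cx b Bb.
by rewrite BCS; split; split => //; apply: SM => //; [apply: BS | apply: SV | apply: BS].
Qed.

Lemma compact_tube B O : compact B -> open O -> B `<=` O ->
  nbhs e (fun w => forall x, B x -> O (mul w x)).
Proof.
move=> cB oO BO.
apply: ((compact_near_coveringP B).1 cB T (nbhs e) (fun w x => O (mul w x))) => x Bx.
have : nbhs (mul e x) O by rewrite tg_mul1g; apply: open_nbhs_nbhs; split => //; apply: BO.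
move=> /nbhs_mulg [A1 [A2 [eA1 xA2 A12O]]].
by exists (A2, A1) => //= -[x' w] /= [x'A2 wA1]; apply: A12O.
Qed.

Lemma stabilizer_nbhs S B O : is_subgroup mul e inv S ->
  compact B -> open O -> B = O `&` S -> exists2 W, nbhs e W & W `&` S `<=` stabilizer S B.
Proof.
move=> [_ SM SV] cB oO BOS.
have BS : B `<=` S by rewrite BOS => x [].
have BO : B `<=` O by rewrite BOS => x [].
have := compact_tube cB oO BO.
set W0 := (fun w => _) => eW0.
exists (W0 `&` inv @^-1` W0).
  by apply: filterI => //; apply: continuous_invg; rewrite tg_invg1.
move=> w [[W0w W0iw] Sw]; split => // b Bb; have Sb := BS b Bb.
rewrite BOS; split; split; [exact: W0w | exact: SM | exact: W0iw |].
by apply: SM => //; apply: SV.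
Qed.

Lemma isolated_unit_discrete_sub S U : is_subgroup mul e inv S ->
  open U -> U e -> U `&` S = [set e] -> discrete_sub S.
Proof.
move=> [_ SM SV] oU Ue USe x Sx.
exists ((fun y => mul (inv x) y) @^-1` U); split.
- by move: oU; apply: (continuousP _).1; apply: continuous_mulgl.
- by rewrite /= tg_mulVg.
apply/seteqP; split => y /=; last by move=> ->; split => //; rewrite tg_mulVg.
move=> [Uy Sy]; have : (U `&` S) (mul (inv x) y) by split => //; apply: SM => //; apply: SV.
by rewrite USe /= => xy_e; rewrite -(tg_mulKVg x y) xy_e tg_mulg1.
Qed.

Lemma finite_nbhs_discrete_sub S W : is_subgroup mul e inv S ->
  nbhs e W -> finite_set (W `&` S) -> discrete_sub S.
Proof.
move=> Ssub eW finWS.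
have cF : closed (W `&` S `\ e).
  apply: (proj1 accessible_finite_set_closed); first exact/hausdorff_accessible/tg_hausdorff.
  by apply: sub_finite_set finWS => x [].
apply: (@isolated_unit_discrete_sub S (W° `&` ~` (W `&` S `\ e))) => //.
- by apply: openI; [exact: open_interior | rewrite openC].
- by split => // -[_]; apply.
have [Se _ _] := Ssub.
apply/seteqP; split => [y [[Wy nF] Sy]|y /= ->]; last by split => //; split => // -[].
by apply: contrapT => ye; apply: nF; split => //; split => //; apply: nbhs_singleton.
Qed.

End TopologicalGroup.

Section Completion.
Context {T : topologicalType} (mul : T -> T -> T) (e : T) (inv : T -> T).
Context {H : topologicalType} (mulH : H -> H -> H) (eH : H) (invH : H -> H).
Hypothesis TG : topological_group mul e inv.
Hypothesis TGH : topological_group mulH eH invH.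
Variable j : T -> H.
Hypothesis j_mul : forall x y, j (mul x y) = mulH (j x) (j y).
Hypothesis j_embedding : forall x U, nbhs x U -> exists V, nbhs (j x) V /\ j @^-1` V `<=` U.

Lemma hom_unit : j e = eH.
Proof. by apply: (tg_idemg_eq1 TGH); rewrite -j_mul (tg_mul1g TG). Qed.

Lemma hom_inv x : j (inv x) = invH (j x).
Proof. by apply: (tg_mulg_eq1_inv TGH); rewrite -j_mul (tg_mulVg TG) hom_unit. Qed.

Lemma metrizable_sub_image_nbhs_base S : metrizable_sub S -> S e ->
  exists V : nat -> set H, (forall m, nbhs eH (V m)) /\
    forall U, nbhs e U -> exists m, forall x, S x -> V m (j x) -> U x.
Proof.
move=> met Se; have [O [eO Obase]] := metrizable_sub_countable_nbhs_base met Se.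
have /choice [V HV] := fun m => j_embedding (eO m).
exists V; split => [m|U /Obase [m OSU]]; first by rewrite -hom_unit; have [] := HV m.
by exists m => x Sx Vjx; apply: OSU; split => //; apply: (HV m).2.
Qed.

(* The subsequence is chosen so that its image approaches the cluster point [h]
   along the countable base; left and right translation by [h^-1] then makes its
   terms mutually close in both uniformities. *)
Lemma image_cluster_cauchy_subseq S (u : nat -> T) h :
  is_subgroup mul e inv S -> metrizable_sub S -> (forall n, S (u n)) ->
  cluster ((j \o u) @ \oo) h ->
  exists2 phi : nat -> nat, (forall k, (k <= phi k)%N) &
    two_sided_cauchy_seq mul e inv (u \o phi).
Proof.
move=> [Se SM SV] met uS clh.
have [V [eV Vbase]] := metrizable_sub_image_nbhs_base met Se.
have /choice [Q HQ] := fun m => nbhs1_two_sided TGH (eV m).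
pose near_h i z := Q i (mulH (invH h) z) /\ Q i (mulH z (invH h)).
have h_near i : nbhs h (near_h i).
  apply: filterI.
    have := @continuous_mulgl _ _ _ _ TGH (invH h) h (Q i).
    by rewrite (tg_mulVg TGH); apply; apply: (HQ i).1.
  have := @continuous_mulgr _ _ _ _ TGH (invH h) h (Q i).
  by rewrite (tg_mulgV TGH); apply; apply: (HQ i).1.
have [phi Hphi] := cluster_subseq clh (fun k => filter_forall_leq k h_near).
exists phi => [k|U /Vbase [m VmU]]; first by have [] := Hphi k.
exists m => k l mk ml.
have [_ /(_ m mk) [Qk1 Qk2]] := Hphi k; have [_ /(_ m ml) [Ql1 Ql2]] := Hphi l.
have [Vl _] := (HQ m).2 _ _ Qk1 Ql1; have [_ Vr] := (HQ m).2 _ _ Qk2 Ql2.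
rewrite /= (mulVg_translate TGH) in Vl; rewrite /= (mulgV_translate TGH) in Vr.
split; apply: VmU; rewrite ?j_mul ?hom_inv //.
  by apply: SM; [apply: SV|]; apply: uS.
by apply: SM; [|apply: SV]; apply: uS.
Qed.

End Completion.

Lemma locally_precompact_seq_cluster {T : topologicalType}
    (mul : T -> T -> T) (e : T) (inv : T -> T) (S : set T) :
  topological_group mul e inv -> locally_precompact mul e inv ->
  sequentially_complete mul e inv -> is_subgroup mul e inv S -> metrizable_sub S ->
  exists N, [/\ open N, N e &
    forall u, (forall n, N (u n) /\ S (u n)) -> exists y, cluster (u @ \oo) y].
Proof.
move=> TG [H [mulH [eH [invH [j [TGH _ [[V [eV cV]] _] [_ j_mul] [j_cont j_emb]]]]]]].
move=> complete Ssub met.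
have : nbhs e (j @^-1` V) by apply: j_cont; rewrite (hom_unit TG TGH j_mul).
rewrite nbhsE => -[N [oN Ne] NV]; exists N; split => // u uNS.
have [h _ clh] := compact_seq_cluster_compact cV (u := j \o u)
  (fun n => @subset_closure _ V _ (NV _ (uNS n).1)).
have [phi phi_ge cauchy] :=
  image_cluster_cauchy_subseq TG TGH j_mul j_emb Ssub met (fun n => (uNS n).2) clh.
have [x cvx] := complete _ cauchy.
by exists x; apply: cvg_subseq_cluster phi_ge cvx.
Qed.

Lemma locally_countably_compact_seq_cluster {T : topologicalType} (e : T) :
  locally_countably_compact e ->
  exists N, [/\ open N, N e & forall u, (forall n, N (u n)) -> exists y, cluster (u @ \oo) y].
Proof.
move=> [U [oU Ue ccU]]; exists U; split => // u uU.
have [y _ cly] := countably_compact_seq_cluster_compact ccU (fun n => subset_closure (uU n)).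
by exists y.
Qed.

Section Equivalence.
Context {T : topologicalType} (mul : T -> T -> T) (e : T) (inv : T -> T).
Hypothesis TG : topological_group mul e inv.

Lemma closed_discrete_compact_finite :
  closed_zd_metrizable_subgroups_discrete mul e inv ->
  compact_zd_metrizable_subgroups_finite mul e inv.
Proof.
move=> discr S Ssub cS met zd; apply: (compact_discrete_sub_finite cS).
by apply: discr => //; apply: compact_closed (tg_hausdorff TG) cS.
Qed.

Lemma discrete_sub_of_seq_cluster S N :
  compact_zd_metrizable_subgroups_finite mul e inv ->
  is_subgroup mul e inv S -> closed S -> zero_dimensional_sub S -> metrizable_sub S ->
  open N -> N e ->
  (forall u, (forall n, N (u n) /\ S (u n)) -> exists y, cluster (u @ \oo) y) ->
  discrete_sub S.
Proof.
move=> fin Ssub cS zd met oN Ne Ncl; have [Se _ _] := Ssub.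
have compactNS C : closed C -> C `&` S `<=` N -> compact (C `&` S).
  move=> cC CSN; apply: (metrizable_sub_compact met) => [x []//|u uCS].
  have [y cly] := Ncl u (fun n => conj (CSN _ (uCS n)) (uCS n).2).
  by exists y => //; apply: closed_seq_cluster (closedI cC cS) uCS cly.
have [B [[O [oO BO]] [C [cC BC]] Be BN]] := zd e N Se oN Ne.
have cB : compact B by rewrite BC; apply: compactNS; rewrite -?BC.
have [C' cC' PC'] := stabilizer_rel_closed TG Ssub cC BC.
have PS : stabilizer mul inv S B `<=` S by move=> x [].
have finP : finite_set (stabilizer mul inv S B).
  apply: fin; first exact: (stabilizer_subgroup TG B Ssub).
  - by rewrite PC'; apply: compactNS; rewrite -?PC' // => x /(stabilizer_sub TG Be) /BN.
  - exact: metrizable_subS PS met.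
  - exact: zero_dimensional_subS PS zd.
have [W eW WSP] := stabilizer_nbhs TG Ssub cB oO BO.
exact: (finite_nbhs_discrete_sub TG Ssub eW (sub_finite_set WSP finP)).
Qed.

End Equivalence.

Theorem proposition2p15 :
  (forall (T : topologicalType) (mul : T -> T -> T) (e : T) (inv : T -> T),
      topological_group mul e inv ->
      locally_precompact mul e inv ->
      sequentially_complete mul e inv ->
      (closed_zd_metrizable_subgroups_discrete mul e inv <->
       compact_zd_metrizable_subgroups_finite mul e inv)) /\
  (forall (T : topologicalType) (mul : T -> T -> T) (e : T) (inv : T -> T),
      topological_group mul e inv ->
      locally_countably_compact e ->
      (closed_zd_metrizable_subgroups_discrete mul e inv <->
       compact_zd_metrizable_subgroups_finite mul e inv)).
Proof.
split=> [T mul e inv TG precompact complete | T mul e inv TG lcc];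
  split=> [|fin S Ssub cS zd met]; try exact: (closed_discrete_compact_finite TG).
- have [N [oN Ne Ncl]] := locally_precompact_seq_cluster TG precompact complete Ssub met.
  exact: (discrete_sub_of_seq_cluster TG fin Ssub cS zd met oN Ne Ncl).
- have [N [oN Ne Ncl]] := locally_countably_compact_seq_cluster lcc.
  apply: (discrete_sub_of_seq_cluster TG fin Ssub cS zd met oN Ne) => u uNS.
  by apply: Ncl => n; have [] := uNS n.
Qed.
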